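(* Let $|q|<1$ and let $x,y,s,t$ be complex numbers with $|t|,|s|,|xt|,|xs|<1$. Then $$\sum_{n=0}^\infty\sum_{m=0}^\infty h_{n+m}(x,y|q)\frac{t^n}{(q;q)_n}\frac{s^m}{(q;q)_m}=\frac{(ys;q)_\infty}{(s,xs,xt;q)_\infty}\ {}_2\phi_1\left(\begin{array}{c} y,\ xs\\ ys\end{array}; q,\ t\right).$$
   Context: Throughout $|q|<1$. $(a;q)_n=\prod_{k=0}^{n-1}(1-aq^k)$, $(a;q)_\infty=\prod_{k\ge0}(1-aq^k)$, $(a_1,\dots,a_m;q)_n=\prod_i(a_i;q)_n$ (also for $n=\infty$), ${n\brack k}=\frac{(q;q)_n}{(q;q)_k(q;q)_{n-k}}$, and ${}_2\phi_1\left(\begin{array}{c}a_1,a_2\\ b_1\end{array};q,z\right)=\sum_{n\ge0}\frac{(a_1,a_2;q)_n}{(q,b_1;q)_n}z^n$. $P_n(x,y)=(x-y)(x-qy)\cdots(x-q^{n-1}y)$ with $P_0=1$, and $h_n(x,y|q)=\sum_{k=0}^n{n\brack k}P_k(x,y)$. *)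

From Stdlib Require Import Reals.
From Coquelicot Require Import Coquelicot.
Open Scope C_scope.

Fixpoint qpoch (a q : C) (n : nat) : C :=
  match n with
  | O => 1
  | S n' => qpoch a q n' * (1 - a * Cpow q n')
  end.

Definition qpoch_inf (a q : C) : C :=
  @lim (CompleteNormedModule.CompleteSpace C_AbsRing C_CompleteNormedModule) (filtermap (fun n => qpoch a q n) eventually).

Definition qbinom (q : C) (n k : nat) : C :=
  qpoch q q n / (qpoch q q k * qpoch q q (n - k)).

Fixpoint Pn (x y q : C) (n : nat) : C :=
  match n with
  | O => 1
  | S n' => Pn x y q n' * (x - Cpow q n' * y)
  end.

Definition hn (x y q : C) (n : nat) : C :=
  sum_n (fun k => qbinom q n k * Pn x y q k) n.

Definition CSeries (a : nat -> C) : C :=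
  @lim (CompleteNormedModule.CompleteSpace C_AbsRing C_CompleteNormedModule)
       (filtermap (fun N => sum_n a N) eventually).

Definition phi21 (a1 a2 b1 q z : C) : C :=
  CSeries (fun n => (qpoch a1 q n * qpoch a2 q n)
                   / (qpoch q q n * qpoch b1 q n) * Cpow z n).

(* Write [h_m = (q;q)_m sum_j P_j(x,y)/(q;q)_j 1/(q;q)_(m-j)]. A recurrence in [m] for
   this convolution gives, by induction on [n],
     h_(n+m)/((q;q)_n (q;q)_m)
       = sum_(k<=n) (y;q)_k x^(n-k)/((q;q)_k (q;q)_(n-k)) h_m(x q^k, y q^k)/(q;q)_m.
   The q-binomial theorem [sum_j P_j(X,Y)/(q;q)_j z^j = (Yz;q)_oo/(Xz;q)_oo], proved from
   the functional equation [(1 - Xz) F(z) = (1 - Yz) F(qz)] of its left side, sums the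
   series in [m]: the [k]-th one is [(ys q^k;q)_oo/((xs q^k;q)_oo (s;q)_oo)], i.e. the
   prefactor [(ys;q)_oo/((s;q)_oo (xs;q)_oo)] times [(xs;q)_k/(ys;q)_k]. The row sums are
   thus the Cauchy product of the 2phi1 series with [sum_l (xt)^l/(q;q)_l = 1/(xt;q)_oo],
   and both factors converge absolutely. *)

From Stdlib Require Import Reals Lra Lia.
From Coquelicot Require Import Coquelicot.
Open Scope C_scope.

(** * q-Pochhammer symbols and the expansion of [h_(n+m)] *)

(* Coquelicot's [sum_n] lemmas live in abstract rings; restated over [C] so that
   [ring] and [field] apply to their instances. *)
Lemma sum_n_C_S (a : nat -> C) n : @eq C (sum_n a (S n)) (sum_n a n + a (S n)).
Proof. exact (sum_Sn a n). Qed.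

Lemma sum_n_C_ext_loc (a b : nat -> C) n :
  (forall k, (k <= n)%nat -> a k = b k) -> @eq C (sum_n a n) (sum_n b n).
Proof. apply sum_n_ext_loc. Qed.

Lemma sum_n_C_plus (a b : nat -> C) n :
  sum_n (fun k => a k + b k) n = sum_n a n + sum_n b n.
Proof. exact (sum_n_plus a b n). Qed.

Lemma sum_n_C_mult_l c (a : nat -> C) n : sum_n (fun k => c * a k) n = c * sum_n a n.
Proof. exact (sum_n_mult_l (K := C_Ring) c a n). Qed.

Lemma sum_n_C_shift (a : nat -> C) n :
  @eq C (sum_n a (S n)) (a O + sum_n (fun k => a (S k)) n).
Proof.
  induction n as [|n IH].
  - rewrite sum_n_C_S, !sum_O. reflexivity.
  - rewrite sum_n_C_S, IH, sum_n_C_S. ring.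
Qed.

Lemma Cmult_reg_l (a b c : C) : a <> 0 -> a * b = a * c -> b = c.
Proof.
  intros Ha E. transitivity (/ a * (a * b)); [field; exact Ha|].
  rewrite E. field. exact Ha.
Qed.

Lemma Cmod_lt_1_neq_1 (w : C) : (Cmod w < 1)%R -> w <> 1.
Proof. intros Hw ->. rewrite Cmod_1 in Hw. lra. Qed.

Lemma Cminus_1_neq0 (w : C) : w <> 1 -> 1 - w <> 0.
Proof. intros Hw E. apply Hw. transitivity (1 - (1 - w)); [ring | rewrite E; ring]. Qed.

Lemma qpoch_neq0 a q n : (forall k, a * q ^ k <> 1) -> qpoch a q n <> 0.
Proof.
  intros Ha. induction n as [|n IH]; simpl.
  - exact C1_nz.
  - apply Cmult_neq_0; [exact IH | apply Cminus_1_neq0, Ha].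
Qed.

Lemma qpoch_add a q k n : qpoch a q (k + n) = qpoch a q k * qpoch (a * q ^ k) q n.
Proof.
  induction n as [|n IH]; simpl.
  - rewrite Nat.add_0_r. ring.
  - rewrite Nat.add_succ_r. simpl. rewrite IH, Cpow_add_r. ring.
Qed.

Lemma qpoch_0_l q n : qpoch 0 q n = 1.
Proof. induction n as [|n IH]; simpl; [|rewrite IH]; ring. Qed.

Lemma Pn_1_l y q j : Pn 1 y q j = qpoch y q j.
Proof. induction j as [|j IH]; simpl; [|rewrite IH]; ring. Qed.

Lemma Pn_scale x y c q j : Pn (x * c) (y * c) q j = c ^ j * Pn x y q j.
Proof. induction j as [|j IH]; simpl; [|rewrite IH]; ring. Qed.

Definition qbin_coef (x y q : C) (j : nat) : C := Pn x y q j / qpoch q q j.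

Definition hconv (x y q : C) (m : nat) : C :=
  sum_n (fun j => qbin_coef x y q j * qbin_coef 1 0 q (m - j)) m.

Definition hsplit_coef (x y q : C) (n k : nat) : C :=
  qpoch y q k * x ^ (n - k) / (qpoch q q k * qpoch q q (n - k)).

Lemma qbin_coef_0 x y q : qbin_coef x y q 0 = 1.
Proof. unfold qbin_coef. simpl. field. Qed.

Lemma qbin_coef_scale x y c q j : qbin_coef (x * c) (y * c) q j = c ^ j * qbin_coef x y q j.
Proof. unfold qbin_coef. rewrite Pn_scale. unfold Cdiv. ring. Qed.

Section UnitDisk.

Variable q : C.
Hypothesis Hq : (Cmod q < 1)%R.

Lemma Cmod_Cpow_le_1 k : (Cmod (q ^ k) <= 1)%R.
Proof.
  rewrite Cmod_pow. pose proof (Cmod_ge_0 q).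
  induction k as [|k IH]; simpl; [lra | nra].
Qed.

Lemma Cmod_qpow_mult_le z k : (Cmod (q ^ k * z) <= Cmod z)%R.
Proof.
  rewrite Cmod_mult. pose proof (Cmod_Cpow_le_1 k). pose proof (Cmod_ge_0 z). nra.
Qed.

Lemma qpoch_neq0_small a n : (Cmod a < 1)%R -> qpoch a q n <> 0.
Proof.
  intros Ha. apply qpoch_neq0. intros k. apply Cmod_lt_1_neq_1.
  rewrite Cmult_comm. eapply Rle_lt_trans; [apply Cmod_qpow_mult_le | exact Ha].
Qed.

Lemma qpoch_q_neq0 n : qpoch q q n <> 0.
Proof. exact (qpoch_neq0_small q n Hq). Qed.

Lemma one_minus_qS_neq0 k : 1 - q * q ^ k <> 0.
Proof.
  apply Cminus_1_neq0, Cmod_lt_1_neq_1. rewrite <- Cpow_S, Cmod_pow.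
  apply pow_lt_1_compat; [split; [apply Cmod_ge_0 | exact Hq] | lia].
Qed.

Lemma qbin_coef_1_0 j : qbin_coef 1 0 q j = / qpoch q q j.
Proof. unfold qbin_coef. rewrite Pn_1_l, qpoch_0_l. unfold Cdiv. ring. Qed.

Lemma qbin_coef_S x y j :
  qbin_coef x y q (S j) * (1 - q * q ^ j) = qbin_coef x y q j * (x - q ^ j * y).
Proof.
  unfold qbin_coef. simpl.
  assert (H1 := qpoch_q_neq0 j). assert (H2 := one_minus_qS_neq0 j).
  field. auto.
Qed.

Lemma hn_hconv x y m : hn x y q m = qpoch q q m * hconv x y q m.
Proof.
  unfold hn, hconv. rewrite <- sum_n_C_mult_l. apply sum_n_C_ext_loc. intros k Hk.
  rewrite qbin_coef_1_0. unfold qbinom, qbin_coef.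
  assert (H1 := qpoch_q_neq0 k). assert (H2 := qpoch_q_neq0 (m - k)).
  field. auto.
Qed.

(* Split [1 - q^(m+1)] as [(1 - q^j) + q^j (1 - q^(m+1-j))] inside the convolution. *)
Lemma hconv_rec X Y m :
  (1 - q * q ^ m) * hconv X Y q (S m)
  = X * hconv X Y q m + (1 - Y) * hconv (X * q) (Y * q) q m.
Proof.
  set (c := qbin_coef X Y q). set (d := qbin_coef 1 0 q).
  transitivity (sum_n (fun j => (1 - q ^ j) * c j * d (S m - j)%nat) (S m)
      + sum_n (fun j => q ^ j * ((1 - q ^ (S m - j)) * d (S m - j)%nat) * c j) (S m)).
  { unfold hconv. rewrite <- sum_n_C_plus, <- sum_n_C_mult_l.
    apply sum_n_C_ext_loc. intros j Hj.
    change (q * q ^ m) with (q ^ S m).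
    replace (q ^ S m) with (q ^ j * q ^ (S m - j)) by (rewrite <- Cpow_add_r; f_equal; lia).
    fold c d. ring. }
  rewrite sum_n_C_shift, sum_n_C_S, Nat.sub_diag. simpl (q ^ 0).
  transitivity (sum_n (fun j => c (S j) * (1 - q * q ^ j) * d (m - j)%nat
                   + q ^ j * (d (S (m - j)) * (1 - q * q ^ (m - j))) * c j) m).
  { rewrite sum_n_C_plus.
    replace (sum_n (fun j => c (S j) * (1 - q * q ^ j) * d (m - j)%nat) m)
      with (sum_n (fun j => (1 - q ^ S j) * c (S j) * d (S m - S j)%nat) m)
      by (apply sum_n_C_ext_loc; intros j Hj; simpl; ring).
    replace (sum_n (fun j => q ^ j * (d (S (m - j)) * (1 - q * q ^ (m - j))) * c j) m)
      with (sum_n (fun j => q ^ j * ((1 - q ^ (S m - j)) * d (S m - j)%nat) * c j) m).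
    - ring.
    - apply sum_n_C_ext_loc. intros j Hj.
      replace (S m - j)%nat with (S (m - j)) by lia. simpl. ring. }
  unfold hconv. rewrite <- !sum_n_C_mult_l, <- sum_n_C_plus.
  apply sum_n_C_ext_loc. intros j Hj.
  unfold c, d. rewrite !qbin_coef_S, qbin_coef_scale. ring.
Qed.

Lemma hsplit_coef_S_0 x y n :
  (1 - q * q ^ n) * hsplit_coef x y q (S n) 0 = hsplit_coef x y q n 0 * x.
Proof.
  unfold hsplit_coef. rewrite !Nat.sub_0_r. simpl.
  assert (H1 := qpoch_q_neq0 n). assert (H2 := one_minus_qS_neq0 n).
  field. auto.
Qed.

Lemma hsplit_coef_S_S x y n k : (k < n)%nat ->
  (1 - q * q ^ n) * hsplit_coef x y q (S n) (S k)
  = hsplit_coef x y q n (S k) * (x * q ^ S k) + hsplit_coef x y q n k * (1 - y * q ^ k).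
Proof.
  intros Hk. destruct (Nat.le_exists_sub (S k) n Hk) as [r [-> _]].
  unfold hsplit_coef.
  replace (S (r + S k) - S k)%nat with (S r) by lia.
  replace (r + S k - S k)%nat with r by lia.
  replace (r + S k - k)%nat with (S r) by lia.
  simpl qpoch. rewrite !Cpow_S, Cpow_add_r. simpl.
  assert (H1 := qpoch_q_neq0 k). assert (H2 := one_minus_qS_neq0 k).
  assert (H3 := qpoch_q_neq0 r). assert (H4 := one_minus_qS_neq0 r).
  field. auto.
Qed.

Lemma hsplit_coef_S_diag x y n :
  (1 - q * q ^ n) * hsplit_coef x y q (S n) (S n) = hsplit_coef x y q n n * (1 - y * q ^ n).
Proof.
  unfold hsplit_coef. rewrite !Nat.sub_diag. simpl.
  assert (H1 := qpoch_q_neq0 n). assert (H2 := one_minus_qS_neq0 n).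
  field. auto.
Qed.

Lemma sum_hsplit_coef_S x y n (g : nat -> C) :
  (1 - q * q ^ n) * sum_n (fun k => hsplit_coef x y q (S n) k * g k) (S n)
  = sum_n (fun k => hsplit_coef x y q n k * (x * q ^ k * g k + (1 - y * q ^ k) * g (S k))) n.
Proof.
  set (B := hsplit_coef x y q).
  set (up := fun k => match k with
                      | O => RtoC 0
                      | S k' => B n k' * (1 - y * q ^ k') * g k
                      end).
  rewrite <- sum_n_C_mult_l, sum_n_C_S.
  transitivity (sum_n (fun k => B n k * (x * q ^ k) * g k + up k) n + up (S n)).
  - f_equal.
    + apply sum_n_C_ext_loc. intros [|k] Hk; unfold up.
      * transitivity ((1 - q * q ^ n) * B (S n) 0%nat * g O); [ring|].
        unfold B. rewrite hsplit_coef_S_0. simpl. ring.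
      * transitivity ((1 - q * q ^ n) * B (S n) (S k) * g (S k)); [ring|].
        unfold B. rewrite hsplit_coef_S_S by lia. ring.
    + unfold up. transitivity ((1 - q * q ^ n) * B (S n) (S n) * g (S n)); [ring|].
      unfold B. rewrite hsplit_coef_S_diag. ring.
  - rewrite sum_n_C_plus, <- Cplus_assoc, <- sum_n_C_S, sum_n_C_shift.
    replace (up O) with (RtoC 0) by reflexivity.
    rewrite Cplus_0_l, <- sum_n_C_plus. apply sum_n_C_ext_loc. intros k Hk.
    unfold up. ring.
Qed.

Lemma hn_add_hsplit x y n m :
  hn x y q (n + m) / (qpoch q q n * qpoch q q m)
  = sum_n (fun k => hsplit_coef x y q n k * hconv (x * q ^ k) (y * q ^ k) q m) n.
Proof.
  revert m. induction n as [|n IH]; intros m.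
  - rewrite sum_O. simpl. rewrite hn_hconv. unfold hsplit_coef. simpl.
    rewrite !Cmult_1_r. assert (H1 := qpoch_q_neq0 m). field. auto.
  - apply (Cmult_reg_l (1 - q * q ^ n)); [apply one_minus_qS_neq0|].
    rewrite sum_hsplit_coef_S.
    replace (S n + m)%nat with (n + S m)%nat by lia.
    transitivity (hn x y q (n + S m) / (qpoch q q n * qpoch q q (S m)) * (1 - q * q ^ m)).
    { simpl qpoch.
      assert (H1 := qpoch_q_neq0 m). assert (H2 := qpoch_q_neq0 n).
      assert (H3 := one_minus_qS_neq0 m). assert (H4 := one_minus_qS_neq0 n).
      field. auto. }
    rewrite IH, Cmult_comm, <- sum_n_C_mult_l. apply sum_n_C_ext_loc. intros k Hk.
    transitivity (hsplit_coef x y q n k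
                  * ((1 - q * q ^ m) * hconv (x * q ^ k) (y * q ^ k) q (S m))); [ring|].
    rewrite hconv_rec.
    replace (x * q ^ k * q) with (x * q ^ S k) by (simpl; ring).
    replace (y * q ^ k * q) with (y * q ^ S k) by (simpl; ring).
    ring.
Qed.

End UnitDisk.

(** * Complex sequences and series *)

Lemma lim_C_Cmod (u : nat -> C) L :
  filterlim u eventually (locally L)
  <-> (forall eps : posreal, eventually (fun n => Cmod (u n - L) < eps)%R).
Proof. exact (filterlim_locally_ball_norm (K := C_AbsRing) u L). Qed.

(* Coquelicot gives [C] the product uniform structure, while [filterlim_mult] is stated
   for the [Cmod] one of [C_AbsRing]; both have the same neighbourhoods. *)
Lemma lim_C_AbsRing (u : nat -> C) L :
  filterlim u eventually (locally L)
  <-> filterlim u eventually (@locally (AbsRing_UniformSpace C_AbsRing) L).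
Proof.
  rewrite lim_C_Cmod. symmetry.
  exact (filterlim_locally (U := AbsRing_UniformSpace C_AbsRing) u L).
Qed.

Lemma lim_C_mult (u v : nat -> C) L M :
  filterlim u eventually (locally L) -> filterlim v eventually (locally M) ->
  filterlim (fun n => u n * v n) eventually (locally (L * M)).
Proof.
  rewrite !lim_C_AbsRing. intros Hu Hv.
  exact (filterlim_comp_2 u v mult Hu Hv (filterlim_mult (K := C_AbsRing) L M)).
Qed.

Lemma lim_C_inv_1 (u : nat -> C) :
  filterlim u eventually (locally (RtoC 1)) ->
  filterlim (fun n => / u n) eventually (locally (RtoC 1)).
Proof.
  rewrite !lim_C_Cmod. intros H eps.
  assert (Hd : (0 < Rmin (eps / 2) (1 / 2))%R) by (apply Rmin_pos; pose proof (cond_pos eps); lra).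
  apply (filter_imp (fun n => Cmod (u n - 1) < mkposreal _ Hd)%R); [|apply H].
  intros n Hn. simpl in Hn.
  assert (Hm1 := Rmin_l (eps / 2) (1 / 2)). assert (Hm2 := Rmin_r (eps / 2) (1 / 2)).
  assert (Hu : (1 / 2 <= Cmod (u n))%R).
  { assert (T := Cmod_triangle (u n) (1 - u n)).
    replace (u n + (1 - u n)) with (RtoC 1) in T by ring.
    replace (1 - u n) with (- (u n - 1)) in T by ring.
    rewrite Cmod_1, Cmod_opp in T. lra. }
  assert (Hnz : u n <> 0) by (intros E; rewrite E, Cmod_0 in Hu; lra).
  replace (/ u n - 1) with (- (u n - 1) / u n) by (field; exact Hnz).
  rewrite Cmod_div, Cmod_opp by exact Hnz.
  apply Rlt_div_l; [lra|]. pose proof (Cmod_ge_0 (u n - 1)). nra.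
Qed.

Lemma lim_C_geom_bound (u : nat -> C) L (M r : R) : (0 <= r < 1)%R ->
  (forall n, Cmod (u n - L) <= M * r ^ n)%R -> filterlim u eventually (locally L).
Proof.
  intros Hr Hb. rewrite lim_C_Cmod. intros eps.
  assert (HM : (0 <= M)%R)
    by (specialize (Hb O); pose proof (Cmod_ge_0 (u O - L)); simpl in Hb; lra).
  assert (Heps : (0 < eps / (M + 1))%R) by (apply Rdiv_lt_0_compat; [apply cond_pos | lra]).
  destruct (pow_lt_1_zero r ltac:(rewrite Rabs_pos_eq; lra) _ Heps) as [N HN].
  exists N. intros n Hn. specialize (HN n Hn). rewrite Rabs_pos_eq in HN by (apply pow_le; lra).
  eapply Rle_lt_trans; [apply Hb|].
  apply Rlt_div_r in HN; [|lra]. pose proof (pow_le r n ltac:(lra)). nra.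
Qed.

Lemma lim_C_unique (u : nat -> C) L : filterlim u eventually (locally L) ->
  @lim (CompleteNormedModule.CompleteSpace C_AbsRing C_CompleteNormedModule)
       (filtermap u eventually) = L.
Proof.
  intros H.
  assert (PF : ProperFilter (filtermap u eventually))
    by (apply filtermap_proper_filter, eventually_filter).
  assert (CF : cauchy (filtermap u eventually))
    by (intros eps; exists L; exact (proj1 (filterlim_locally u L) H eps)).
  apply (filterlim_locally_unique (F := eventually) u); [|exact H].
  apply filterlim_locally. intros eps.
  exact (@complete_cauchy (CompleteNormedModule.CompleteSpace C_AbsRing C_CompleteNormedModule)
           _ PF CF eps).
Qed.

Lemma CSeries_unique (a : nat -> C) l : is_series a l -> CSeries a = l.
Proof. intros H. exact (lim_C_unique _ _ H). Qed.

Lemma is_series_C_unique (a : nat -> C) l1 l2 : is_series a l1 -> is_series a l2 -> l1 = l2.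
Proof. apply (filterlim_locally_unique (F := eventually)). Qed.

Lemma is_series_C_plus (a b : nat -> C) la lb : is_series a la -> is_series b lb ->
  is_series (fun n => a n + b n) (la + lb).
Proof. exact (is_series_plus a b la lb). Qed.

Lemma is_series_C_scal c (a : nat -> C) l : is_series a l -> is_series (fun n => c * a n) (c * l).
Proof. exact (is_series_scal (V := C_NormedModule) c a l). Qed.

Lemma is_series_C_incr_1 (a : nat -> C) (l : C) :
  is_series a l -> is_series (fun k => a (S k)) (l - a O).
Proof.
  intros H. apply is_series_incr_1.
  match goal with |- is_series _ ?l' => replace l' with l; [exact H|] end.
  change (@eq C l (l - a O + a O)). ring.
Qed.

Lemma is_series_C_sum_n (c : nat -> C) (u : nat -> nat -> C) (L : nat -> C) N :
  (forall k, is_series (u k) (L k)) ->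
  is_series (fun m => sum_n (fun k => c k * u k m) N) (sum_n (fun k => c k * L k) N).
Proof.
  intros H. induction N as [|N IH].
  - rewrite sum_O. apply (is_series_ext (fun m => c O * u O m)).
    + intros m. rewrite sum_O. reflexivity.
    + apply is_series_C_scal, H.
  - rewrite sum_n_C_S.
    apply (is_series_ext (fun m => sum_n (fun k => c k * u k m) N + c (S N) * u (S N) m)).
    + intros m. rewrite sum_n_C_S. reflexivity.
    + apply is_series_C_plus; [exact IH | apply is_series_C_scal, H].
Qed.

Lemma ex_series_C_Cmod (a : nat -> C) : ex_series (fun n => Cmod (a n)) -> ex_series a.
Proof.
  apply (ex_series_le (K := C_AbsRing) (V := C_CompleteNormedModule)).
  intros n. apply Rle_refl.
Qed.

Lemma Cmod_series_le (a : nat -> C) (b : nat -> R) l L :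
  is_series a l -> is_series b L -> (forall n, Cmod (a n) <= b n)%R -> (Cmod l <= L)%R.
Proof.
  intros Ha Hb Hab.
  assert (Hpart : forall N, (Cmod (sum_n a N) <= sum_n b N)%R).
  { induction N as [|N IH].
    - rewrite !sum_O. apply Hab.
    - rewrite sum_n_C_S, sum_Sn. eapply Rle_trans; [apply Cmod_triangle|].
      specialize (Hab (S N)). change (plus (sum_n b N) (b (S N))) with (sum_n b N + b (S N))%R.
      lra. }
  assert (Hnorm : is_lim_seq (fun N => Cmod (sum_n a N)) (Cmod l)).
  { apply (filterlim_comp _ _ _ (sum_n a) norm _ (locally l)); [exact Ha|].
    exact (filterlim_norm (V := C_NormedModule) l). }
  exact (is_lim_seq_le _ _ (Cmod l) L Hpart Hnorm Hb).
Qed.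

Lemma sum_n_C_Re_Im (a : nat -> C) N :
  sum_n a N = (sum_n (fun n => Re (a n)) N, sum_n (fun n => Im (a n)) N).
Proof.
  induction N as [|N IH].
  - rewrite !sum_O. destruct (a O). reflexivity.
  - rewrite !sum_Sn, IH. reflexivity.
Qed.

Lemma Re_sum_n (a : nat -> C) N : Re (sum_n a N) = sum_n (fun n => Re (a n)) N.
Proof. rewrite sum_n_C_Re_Im. reflexivity. Qed.

Lemma Im_sum_n (a : nat -> C) N : Im (sum_n a N) = sum_n (fun n => Im (a n)) N.
Proof. rewrite sum_n_C_Re_Im. reflexivity. Qed.

Lemma sum_n_R_minus (u v : nat -> R) N :
  sum_n (fun k => u k - v k)%R N = (sum_n u N - sum_n v N)%R.
Proof.
  induction N as [|N IH]; [rewrite !sum_O; reflexivity|].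
  rewrite !sum_Sn, IH. change (sum_n u N - sum_n v N + (u (S N) - v (S N))
    = sum_n u N + u (S N) - (sum_n v N + v (S N)))%R. ring.
Qed.

(* The uniform structure of [C] is the product one, so its balls are pairs of real balls. *)
Lemma is_series_C_Re_Im (a : nat -> C) (l : C) :
  is_series a l
  <-> is_series (fun n => Re (a n)) (Re l) /\ is_series (fun n => Im (a n)) (Im l).
Proof.
  unfold is_series. split.
  - intros H. split; apply filterlim_locally; intros eps;
      generalize (proj1 (filterlim_locally _ _) H eps); apply filter_imp;
      intros N; rewrite sum_n_C_Re_Im; intros [H1 H2]; assumption.
  - intros [H1 H2]. apply filterlim_locally. intros eps.
    generalize (filter_and _ _ (proj1 (filterlim_locally _ _) H1 eps)
                               (proj1 (filterlim_locally _ _) H2 eps)).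
    apply filter_imp. intros N. rewrite sum_n_C_Re_Im. intros HN. exact HN.
Qed.

Lemma ex_series_Rabs_le_Cmod (u : nat -> R) (a : nat -> C) :
  (forall n, Rabs (u n) <= Cmod (a n))%R -> ex_series (fun n => Cmod (a n)) ->
  ex_series (fun n => Rabs (u n)).
Proof.
  intros H. apply (ex_series_le (K := R_AbsRing) (V := R_CompleteNormedModule)).
  intros n. change (norm (Rabs (u n))) with (Rabs (Rabs (u n))).
  rewrite Rabs_Rabsolu. apply H.
Qed.

Lemma im_le_Cmod (z : C) : (Rabs (Im z) <= Cmod z)%R.
Proof. eapply Rle_trans; [apply Rmax_r | apply Rmax_Cmod]. Qed.

(* Mertens' theorem for complex series, from the real one applied to real and imaginary parts. *)
Lemma is_series_C_mult (a b : nat -> C) (la lb : C) :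
  is_series a la -> is_series b lb ->
  ex_series (fun n => Cmod (a n)) -> ex_series (fun n => Cmod (b n)) ->
  is_series (fun n => sum_n (fun k => a k * b (n - k)%nat) n) (la * lb).
Proof.
  rewrite !is_series_C_Re_Im. intros [Ha1 Ha2] [Hb1 Hb2] Aa Ab.
  assert (Aa1 := ex_series_Rabs_le_Cmod _ _ (fun n => re_le_Cmod (a n)) Aa).
  assert (Aa2 := ex_series_Rabs_le_Cmod _ _ (fun n => im_le_Cmod (a n)) Aa).
  assert (Ab1 := ex_series_Rabs_le_Cmod _ _ (fun n => re_le_Cmod (b n)) Ab).
  assert (Ab2 := ex_series_Rabs_le_Cmod _ _ (fun n => im_le_Cmod (b n)) Ab).
  split.
  - eapply is_series_ext; [| exact (is_series_minus _ _ _ _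
        (is_series_mult _ _ _ _ Ha1 Hb1 Aa1 Ab1) (is_series_mult _ _ _ _ Ha2 Hb2 Aa2 Ab2))].
    intros n. rewrite Re_sum_n, <- !sum_n_Reals.
    change (plus ?x (opp ?y)) with (x - y)%R. rewrite <- sum_n_R_minus.
    apply sum_n_ext. intros k. reflexivity.
  - eapply is_series_ext; [| exact (is_series_plus _ _ _ _
        (is_series_mult _ _ _ _ Ha1 Hb2 Aa1 Ab2) (is_series_mult _ _ _ _ Ha2 Hb1 Aa2 Ab1))].
    intros n. rewrite Im_sum_n, <- !sum_n_Reals, <- sum_n_plus.
    apply sum_n_ext. intros k. reflexivity.
Qed.

(** * The q-binomial theorem *)

Lemma ex_series_ratio (c : nat -> R) (rho : R) N :
  (forall j, 0 <= c j)%R -> (0 <= rho < 1)%R ->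
  (forall j, (N <= j)%nat -> c (S j) <= rho * c j)%R -> ex_series c.
Proof.
  intros Hpos Hrho Hstep.
  assert (Hgeom : forall k, (c (N + k)%nat <= c N * rho ^ k)%R).
  { induction k as [|k IH]; [rewrite Nat.add_0_r; simpl; lra|].
    rewrite Nat.add_succ_r. eapply Rle_trans; [apply Hstep; lia|]. simpl.
    pose proof (Hpos (N + k)%nat). nra. }
  apply (ex_series_incr_n c N).
  apply (ex_series_le (K := R_AbsRing) (V := R_CompleteNormedModule) _
           (fun k => c N * rho ^ k)%R).
  - intros k. change (norm (c (N + k)%nat)) with (Rabs (c (N + k)%nat)).
    rewrite Rabs_pos_eq by apply Hpos. apply Hgeom.
  - apply (ex_series_scal (K := R_AbsRing) (V := R_NormedModule) (c N) (fun k => rho ^ k)%R).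
    apply ex_series_geom. rewrite Rabs_pos_eq; lra.
Qed.

Lemma Cmod_1_minus_ge (w : C) : (1 - Cmod w <= Cmod (1 - w))%R.
Proof.
  assert (T := Cmod_triangle (1 - w) w).
  replace (1 - w + w) with (RtoC 1) in T by ring. rewrite Cmod_1 in T. lra.
Qed.

Definition qbin_series (X Y q z : C) : C := CSeries (fun j => qbin_coef X Y q j * z ^ j).

Section QBinomial.

Variable q : C.
Hypothesis Hq : (Cmod q < 1)%R.

Lemma qbin_coef_ratio X Y z j :
  qbin_coef X Y q (S j) * z ^ S j
  = qbin_coef X Y q j * z ^ j * ((X - q ^ j * Y) * z / (1 - q * q ^ j)).
Proof.
  apply (Cmult_reg_l (1 - q * q ^ j)); [apply one_minus_qS_neq0; exact Hq|].
  transitivity (qbin_coef X Y q (S j) * (1 - q * q ^ j) * z ^ S j); [ring|].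
  rewrite qbin_coef_S by exact Hq. simpl.
  field. apply one_minus_qS_neq0. exact Hq.
Qed.

(* Ratio test: the ratio tends to [|X z|], so it eventually stays below [rho = (1 + |X z|)/2]. *)
Lemma ex_series_Cmod_qbin X Y z : (Cmod (X * z) < 1)%R ->
  ex_series (fun j => Cmod (qbin_coef X Y q j * z ^ j)).
Proof.
  intros Hxz.
  assert (Ha := Cmod_ge_0 (X * z)). assert (Hb := Cmod_ge_0 (Y * z)).
  set (a := Cmod (X * z)) in *. set (b := Cmod (Y * z)) in *.
  set (rho := ((1 + a) / 2)%R).
  assert (Hdelta : (0 < (rho - a) / (b + rho))%R)
    by (unfold rho; apply Rdiv_lt_0_compat; lra).
  destruct (pow_lt_1_zero (Cmod q) ltac:(rewrite Rabs_pos_eq; [lra | apply Cmod_ge_0]) _ Hdelta)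
    as [N HN].
  apply (ex_series_ratio _ rho N); [intros; apply Cmod_ge_0 | unfold rho; lra |].
  intros j Hj. rewrite qbin_coef_ratio, Cmod_mult, Rmult_comm.
  apply Rmult_le_compat_r; [apply Cmod_ge_0|].
  specialize (HN j Hj). rewrite Rabs_pos_eq in HN by (apply pow_le, Cmod_ge_0).
  set (e := (Cmod q ^ j)%R) in HN.
  assert (He : (0 <= e)%R) by (apply pow_le, Cmod_ge_0).
  assert (Hsmall : (a + e * b < rho * (1 - e))%R).
  { apply Rlt_div_r in HN; [|unfold rho; lra]. nra. }
  assert (Hnum : (Cmod ((X - q ^ j * Y) * z) <= a + e * b)%R).
  { replace ((X - q ^ j * Y) * z) with (X * z + - (q ^ j * (Y * z))) by ring.
    eapply Rle_trans; [apply Cmod_triangle|].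
    rewrite Cmod_opp, (Cmod_mult (q ^ j)), Cmod_pow. apply Rle_refl. }
  assert (Hden : (1 - e <= Cmod (1 - q * q ^ j))%R).
  { eapply Rle_trans; [|apply Cmod_1_minus_ge].
    rewrite Cmod_mult, Cmod_pow. fold e.
    assert (Cmod q * e <= e)%R
      by (rewrite <- (Rmult_1_l e) at 2; apply Rmult_le_compat_r; lra).
    lra. }
  rewrite Cmod_div by (apply one_minus_qS_neq0; exact Hq).
  assert (Hrho : (0 < rho)%R) by (unfold rho; lra).
  assert (Heb : (0 <= e * b)%R) by (apply Rmult_le_pos; lra).
  assert (He1 : (0 < 1 - e)%R) by nra.
  assert (rho * (1 - e) <= rho * Cmod (1 - q * q ^ j))%R by (apply Rmult_le_compat_l; lra).
  apply Rle_div_l; lra.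
Qed.

Lemma Cmod_mult_qpow_lt_1 X z k : (Cmod (X * z) < 1)%R -> (Cmod (X * (q ^ k * z)) < 1)%R.
Proof.
  intros Hz. replace (X * (q ^ k * z)) with (q ^ k * (X * z)) by ring.
  eapply Rle_lt_trans; [apply Cmod_qpow_mult_le; exact Hq | exact Hz].
Qed.

Lemma is_series_qbin_series X Y z : (Cmod (X * z) < 1)%R ->
  is_series (fun j => qbin_coef X Y q j * z ^ j) (qbin_series X Y q z).
Proof.
  intros Hz. destruct (ex_series_C_Cmod _ (ex_series_Cmod_qbin X Y z Hz)) as [l Hl].
  unfold qbin_series. rewrite (CSeries_unique _ l Hl). exact Hl.
Qed.

(* Termwise, [qbin_coef_S] turns [F z - F (q z)] into [z (X F z - Y F (q z))]. *)
Lemma qbin_series_q_shift X Y z : (Cmod (X * z) < 1)%R ->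
  (1 - X * z) * qbin_series X Y q z = (1 - Y * z) * qbin_series X Y q (q * z).
Proof.
  intros Hz.
  assert (Hqz : (Cmod (X * (q * z)) < 1)%R).
  { replace (q * z) with (q ^ 1 * z) by (simpl; ring). apply Cmod_mult_qpow_lt_1, Hz. }
  set (c := qbin_coef X Y q). set (F := qbin_series X Y q).
  assert (Hdiff : is_series (fun j => c j * z ^ j + -1 * (c j * (q * z) ^ j))
                            (F z + -1 * F (q * z))).
  { apply is_series_C_plus; [|apply is_series_C_scal];
      apply is_series_qbin_series; assumption. }
  assert (Hrhs : is_series (fun j => z * (X * (c j * z ^ j) + - Y * (c j * (q * z) ^ j)))
                           (z * (X * F z + - Y * F (q * z)))).
  { apply is_series_C_scal, is_series_C_plus; apply is_series_C_scal;
      apply is_series_qbin_series; assumption. }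
  apply is_series_C_incr_1 in Hdiff.
  assert (Hterm : forall j, z * (X * (c j * z ^ j) + - Y * (c j * (q * z) ^ j))
                  = c (S j) * z ^ S j + -1 * (c (S j) * (q * z) ^ S j)).
  { intros j. rewrite !Cpow_mult_l.
    transitivity (c j * (X - q ^ j * Y) * (z * z ^ j)); [ring|].
    unfold c. rewrite <- qbin_coef_S by exact Hq. simpl. ring. }
  apply (is_series_ext _ _ _ Hterm) in Hrhs.
  pose proof (is_series_C_unique _ _ _ Hdiff Hrhs) as U.
  unfold c in U. rewrite qbin_coef_0 in U. simpl in U.
  transitivity ((1 - Y * z) * F (q * z)
    + (F z + -1 * F (q * z) - (1 * 1 + -1 * (1 * 1)) - z * (X * F z + - Y * F (q * z))));
    [ring|].
  rewrite U. ring.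
Qed.

Lemma qbin_series_qpow X Y z n : (Cmod (X * z) < 1)%R ->
  qpoch (X * z) q n * qbin_series X Y q z = qpoch (Y * z) q n * qbin_series X Y q (q ^ n * z).
Proof.
  intros Hz. induction n as [|n IH]; simpl qpoch.
  - rewrite Cmult_1_l. simpl. rewrite !Cmult_1_l. reflexivity.
  - transitivity (qpoch (X * z) q n * qbin_series X Y q z * (1 - X * z * q ^ n)); [ring|].
    rewrite IH.
    transitivity (qpoch (Y * z) q n
                  * ((1 - X * (q ^ n * z)) * qbin_series X Y q (q ^ n * z))); [ring|].
    rewrite qbin_series_q_shift by (apply Cmod_mult_qpow_lt_1, Hz).
    replace (q * (q ^ n * z)) with (q ^ S n * z) by (simpl; ring). ring.
Qed.

(* [|F (q^n z) - 1| <= |q|^n sum_(j>=1) |c_j z^j|]. *)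
Lemma lim_qbin_series_qpow X Y z : (Cmod (X * z) < 1)%R ->
  filterlim (fun n => qbin_series X Y q (q ^ n * z)) eventually (locally (RtoC 1)).
Proof.
  intros Hz.
  set (c := qbin_coef X Y q).
  set (M := Series (fun j => Cmod (c (S j) * z ^ S j))).
  assert (HM : is_series (fun j => Cmod (c (S j) * z ^ S j)) M).
  { apply Series_correct.
    apply (ex_series_incr_1 (fun j => Cmod (c j * z ^ j))), ex_series_Cmod_qbin, Hz. }
  apply (lim_C_geom_bound _ _ M (Cmod q)); [split; [apply Cmod_ge_0 | exact Hq]|].
  intros n.
  pose proof (is_series_qbin_series X Y _ (Cmod_mult_qpow_lt_1 X z n Hz)) as Htail.
  apply is_series_C_incr_1 in Htail. rewrite qbin_coef_0 in Htail. fold c in Htail.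
  replace (1 * (q ^ n * z) ^ 0) with (RtoC 1) in Htail by (simpl; ring).
  rewrite <- Cmod_pow, Rmult_comm.
  apply (Cmod_series_le _ _ _ _ Htail (is_series_scal (K := R_AbsRing) (Cmod (q ^ n)) _ _ HM)).
  intros j. change (scal (Cmod (q ^ n)) (Cmod (c (S j) * z ^ S j)))
    with (Cmod (q ^ n) * Cmod (c (S j) * z ^ S j))%R.
  rewrite Cpow_mult_l, Cmult_assoc, (Cmult_comm (c (S j))), <- Cmult_assoc.
  rewrite (Cmod_mult ((q ^ n) ^ S j)). apply Rmult_le_compat_r; [apply Cmod_ge_0|].
  rewrite Cpow_S, Cmod_mult, <- Cpow_mult_r.
  pose proof (Cmod_Cpow_le_1 q Hq (n * j)). pose proof (Cmod_ge_0 (q ^ n)). nra.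
Qed.

(* With [X = 0], [qbin_series_qpow] reads [(a;q)_n F (q^n) = F 1] and [F (q^n) -> 1]. *)
Lemma is_lim_qpoch a : filterlim (qpoch a q) eventually (locally (qpoch_inf a q)).
Proof.
  assert (H01 : (Cmod (0 * 1) < 1)%R) by (rewrite Cmult_0_l, Cmod_0; lra).
  set (F := qbin_series 0 a q).
  assert (Hlim : filterlim (qpoch a q) eventually (locally (F 1))).
  { rewrite <- (Cmult_1_r (F 1)).
    apply (filterlim_ext_loc (fun n => F 1 * / F (q ^ n * 1))).
    - generalize (proj1 (lim_C_Cmod _ _) (lim_qbin_series_qpow 0 a 1 H01) (mkposreal 1 Rlt_0_1)).
      apply filter_imp. intros n Hn. simpl in Hn.
      assert (Hnz : F (q ^ n * 1) <> 0).
      { intros E. fold F in Hn. rewrite E in Hn.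
        replace (0 - 1) with (- (1)) in Hn by ring. rewrite Cmod_opp, Cmod_1 in Hn. lra. }
      pose proof (qbin_series_qpow 0 a 1 n H01) as Hiter. fold F in Hiter.
      rewrite Cmult_0_l, qpoch_0_l, Cmult_1_l, Cmult_1_r in Hiter.
      rewrite Hiter. field. exact Hnz.
    - apply lim_C_mult; [apply filterlim_const | apply lim_C_inv_1, lim_qbin_series_qpow, H01]. }
  replace (qpoch_inf a q) with (F 1); [exact Hlim|].
  symmetry. exact (lim_C_unique _ _ Hlim).
Qed.

Lemma qpoch_inf_0 : qpoch_inf 0 q = 1.
Proof.
  apply lim_C_unique. apply (filterlim_ext (fun _ => RtoC 1)).
  - intros n. symmetry. apply qpoch_0_l.
  - apply filterlim_const.
Qed.

Lemma qpoch_inf_split a k : qpoch_inf a q = qpoch a q k * qpoch_inf (a * q ^ k) q.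
Proof.
  apply (filterlim_locally_unique (F := eventually) (fun n => qpoch a q (k + n))).
  - apply (filterlim_comp _ _ _ (fun n => (k + n)%nat) (qpoch a q) _ eventually).
    + intros P [N HN]. exists N. intros n Hn. apply HN. lia.
    + apply is_lim_qpoch.
  - apply (filterlim_ext (fun n => qpoch a q k * qpoch (a * q ^ k) q n)).
    + intros n. symmetry. apply qpoch_add.
    + apply lim_C_mult; [apply filterlim_const | apply is_lim_qpoch].
Qed.

Lemma qpoch_inf_mult_qbin_series X Y z : (Cmod (X * z) < 1)%R ->
  qpoch_inf (X * z) q * qbin_series X Y q z = qpoch_inf (Y * z) q.
Proof.
  intros Hz. rewrite <- (Cmult_1_r (qpoch_inf (Y * z) q)).
  apply (filterlim_locally_unique (F := eventually)
           (fun n => qpoch (X * z) q n * qbin_series X Y q z)).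
  - apply lim_C_mult; [apply is_lim_qpoch | apply filterlim_const].
  - apply (filterlim_ext (fun n => qpoch (Y * z) q n * qbin_series X Y q (q ^ n * z))).
    + intros n. symmetry. apply qbin_series_qpow, Hz.
    + apply lim_C_mult; [apply is_lim_qpoch | apply lim_qbin_series_qpow, Hz].
Qed.

Lemma qpoch_inf_neq0_small a : (Cmod a < 1)%R -> qpoch_inf a q <> 0.
Proof.
  intros Ha E.
  pose proof (qpoch_inf_mult_qbin_series a 0 1) as H.
  rewrite !Cmult_1_r, qpoch_inf_0, E, Cmult_0_l in H.
  exact (C1_nz (eq_sym (H Ha))).
Qed.

Theorem q_binomial X Y z : (Cmod (X * z) < 1)%R ->
  is_series (fun j => qbin_coef X Y q j * z ^ j) (qpoch_inf (Y * z) q / qpoch_inf (X * z) q).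
Proof.
  intros Hz. rewrite <- (qpoch_inf_mult_qbin_series X Y z Hz).
  replace (qpoch_inf (X * z) q * qbin_series X Y q z / qpoch_inf (X * z) q)
    with (qbin_series X Y q z) by (field; apply qpoch_inf_neq0_small, Hz).
  apply is_series_qbin_series, Hz.
Qed.

Lemma qpoch_inf_neq0 a : (forall k, a * q ^ k <> 1) -> qpoch_inf a q <> 0.
Proof.
  intros Ha.
  assert (Heps : (0 < / (Cmod a + 1))%R) by (apply Rinv_0_lt_compat; pose proof (Cmod_ge_0 a); lra).
  destruct (pow_lt_1_zero (Cmod q) ltac:(rewrite Rabs_pos_eq; [lra | apply Cmod_ge_0]) _ Heps)
    as [k Hk].
  specialize (Hk k (le_n k)). rewrite Rabs_pos_eq in Hk by (apply pow_le, Cmod_ge_0).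
  rewrite (qpoch_inf_split a k). apply Cmult_neq_0; [apply qpoch_neq0, Ha|].
  apply qpoch_inf_neq0_small.
  rewrite Cmod_mult, Cmod_pow. pose proof (Cmod_ge_0 a).
  apply (Rmult_lt_compat_l (Cmod a + 1)) in Hk; [|lra].
  rewrite Rinv_r in Hk by lra. pose proof (pow_le (Cmod q) k (Cmod_ge_0 q)). nra.
Qed.

End QBinomial.

(** * The double generating function *)

Definition phi21_term (a1 a2 b1 q z : C) (n : nat) : C :=
  (qpoch a1 q n * qpoch a2 q n) / (qpoch q q n * qpoch b1 q n) * z ^ n.

Lemma is_series_phi21 a1 a2 b1 q z :
  ex_series (fun n => Cmod (phi21_term a1 a2 b1 q z n)) ->
  is_series (phi21_term a1 a2 b1 q z) (phi21 a1 a2 b1 q z).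
Proof.
  intros Habs. destruct (ex_series_C_Cmod _ Habs) as [l Hl].
  unfold phi21. fold (phi21_term a1 a2 b1 q z). rewrite (CSeries_unique _ _ Hl). exact Hl.
Qed.

Section Generating.

Variable q : C.
Hypothesis Hq : (Cmod q < 1)%R.

Lemma is_series_hconv X Y s : (Cmod (X * s) < 1)%R -> (Cmod s < 1)%R ->
  is_series (fun m => hconv X Y q m * s ^ m)
            (qpoch_inf (Y * s) q / qpoch_inf (X * s) q * (1 / qpoch_inf s q)).
Proof.
  intros Hxs Hs.
  assert (H1 : (Cmod (1 * s) < 1)%R) by (rewrite Cmult_1_l; exact Hs).
  pose proof (q_binomial q Hq 1 0 s H1) as Hd.
  rewrite Cmult_0_l, qpoch_inf_0, Cmult_1_l in Hd by exact Hq.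
  eapply is_series_ext; [| apply is_series_C_mult;
    [ apply q_binomial; assumption | exact Hd
    | apply ex_series_Cmod_qbin; assumption | apply ex_series_Cmod_qbin; assumption ]].
  intros m. unfold hconv. rewrite Cmult_comm, <- sum_n_C_mult_l.
  apply sum_n_C_ext_loc. intros j Hj.
  replace (s ^ m) with (s ^ j * s ^ (m - j)) by (rewrite <- Cpow_add_r; f_equal; lia).
  ring.
Qed.

Lemma qpoch_inf_ratio_shift a b k :
  qpoch a q k <> 0 -> qpoch b q k <> 0 -> qpoch_inf a q <> 0 ->
  qpoch_inf (b * q ^ k) q / qpoch_inf (a * q ^ k) q
  = qpoch_inf b q / qpoch_inf a q * (qpoch a q k / qpoch b q k).
Proof.
  intros Ha Hb Hinf. rewrite (qpoch_inf_split q Hq a k) in *. rewrite (qpoch_inf_split q Hq b k).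
  assert (qpoch_inf (a * q ^ k) q <> 0) by (intros E; apply Hinf; rewrite E; ring).
  field. auto.
Qed.

Lemma Cmod_qpoch_inf_ratio_le X Y z k : (Cmod (X * z) < 1)%R ->
  (Cmod (qpoch_inf (Y * z * q ^ k) q / qpoch_inf (X * z * q ^ k) q)
   <= Series (fun j => Cmod (qbin_coef X Y q j * z ^ j)))%R.
Proof.
  intros Hz.
  assert (Hk : (Cmod (X * q ^ k * z) < 1)%R)
    by (rewrite <- Cmult_assoc; apply Cmod_mult_qpow_lt_1; assumption).
  pose proof (q_binomial q Hq _ (Y * q ^ k) z Hk) as Hser.
  replace (Y * q ^ k * z) with (Y * z * q ^ k) in Hser by ring.
  replace (X * q ^ k * z) with (X * z * q ^ k) in Hser by ring.
  apply (Cmod_series_le _ _ _ _ Hser (Series_correct _ (ex_series_Cmod_qbin q Hq X Y z Hz))).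
  intros j. rewrite qbin_coef_scale, <- Cmult_assoc, Cmod_mult, <- Cpow_mult_r.
  pose proof (Cmod_Cpow_le_1 q Hq (k * j)). pose proof (Cmod_ge_0 (qbin_coef X Y q j * z ^ j)).
  nra.
Qed.

Lemma is_series_hn_row_split x y s t n : (Cmod (x * s) < 1)%R -> (Cmod s < 1)%R ->
  is_series (fun m => hn x y q (n + m) * (t ^ n / qpoch q q n) * (s ^ m / qpoch q q m))
    (sum_n (fun k => t ^ n * hsplit_coef x y q n k
        * (qpoch_inf (y * s * q ^ k) q / qpoch_inf (x * s * q ^ k) q * (1 / qpoch_inf s q))) n).
Proof.
  intros Hxs Hs.
  apply (is_series_ext (fun m => sum_n (fun k => t ^ n * hsplit_coef x y q n k
                          * (hconv (x * q ^ k) (y * q ^ k) q m * s ^ m)) n)).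
  - intros m.
    apply (@eq_trans C _ (t ^ n * s ^ m * (hn x y q (n + m) / (qpoch q q n * qpoch q q m)))).
    + rewrite hn_add_hsplit by exact Hq. rewrite <- sum_n_C_mult_l.
      apply sum_n_C_ext_loc. intros k _. ring.
    + assert (H1 := qpoch_q_neq0 q Hq n). assert (H2 := qpoch_q_neq0 q Hq m).
      field. auto.
  - apply is_series_C_sum_n. intros k.
    replace (y * s * q ^ k) with (y * q ^ k * s) by ring.
    replace (x * s * q ^ k) with (x * q ^ k * s) by ring.
    apply is_series_hconv; [| exact Hs].
    rewrite <- Cmult_assoc. apply Cmod_mult_qpow_lt_1; assumption.
Qed.

Lemma hn_row_term_eq x y s t n k : (k <= n)%nat ->
  (Cmod (x * s) < 1)%R -> (Cmod s < 1)%R -> (forall j, y * s * q ^ j <> 1) ->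
  t ^ n * hsplit_coef x y q n k
    * (qpoch_inf (y * s * q ^ k) q / qpoch_inf (x * s * q ^ k) q * (1 / qpoch_inf s q))
  = qpoch_inf (y * s) q / (qpoch_inf s q * qpoch_inf (x * s) q)
    * (phi21_term y (x * s) (y * s) q t k * (qbin_coef 1 0 q (n - k) * (x * t) ^ (n - k))).
Proof.
  intros Hkn Hxs Hs Hys.
  assert (Hxsk := qpoch_neq0_small q Hq (x * s) k Hxs).
  assert (Hysk := qpoch_neq0 (y * s) q k Hys).
  assert (Hxsinf := qpoch_inf_neq0_small q Hq (x * s) Hxs).
  assert (Hsinf := qpoch_inf_neq0_small q Hq s Hs).
  rewrite qpoch_inf_ratio_shift by assumption.
  rewrite qbin_coef_1_0 by exact Hq. unfold phi21_term, hsplit_coef.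
  replace (t ^ n) with (t ^ k * t ^ (n - k)) by (rewrite <- Cpow_add_r; f_equal; lia).
  rewrite Cpow_mult_l.
  assert (H1 := qpoch_q_neq0 q Hq k). assert (H2 := qpoch_q_neq0 q Hq (n - k)).
  field. repeat split; assumption.
Qed.

(* [(x s;q)_k / (y s;q)_k] is a ratio of tails of infinite products, bounded by
   the q-binomial theorem. *)
Lemma ex_series_Cmod_phi21_term x y s t :
  (Cmod t < 1)%R -> (Cmod (x * s) < 1)%R -> (forall j, y * s * q ^ j <> 1) ->
  ex_series (fun k => Cmod (phi21_term y (x * s) (y * s) q t k)).
Proof.
  intros Ht Hxs Hys.
  assert (Hyinf := qpoch_inf_neq0 q Hq (y * s) Hys).
  assert (Hxsinf := qpoch_inf_neq0_small q Hq (x * s) Hxs).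
  set (M := Series (fun j => Cmod (qbin_coef x y q j * s ^ j))).
  set (K0 := qpoch_inf (y * s) q / qpoch_inf (x * s) q).
  assert (HK0 : K0 <> 0).
  { intros E. apply Hyinf. transitivity (K0 * qpoch_inf (x * s) q).
    - unfold K0. field. exact Hxsinf.
    - rewrite E. ring. }
  apply (ex_series_le (K := R_AbsRing) (V := R_CompleteNormedModule) _
           (fun k => Cmod (qbin_coef 1 y q k * t ^ k) * (M / Cmod K0))%R).
  - intros k. change (norm (Cmod ?z)) with (Rabs (Cmod z)). rewrite Rabs_pos_eq by apply Cmod_ge_0.
    assert (Hxsk := qpoch_neq0_small q Hq (x * s) k Hxs).
    assert (Hysk := qpoch_neq0 (y * s) q k Hys).
    assert (Hratio := qpoch_inf_ratio_shift (x * s) (y * s) k Hxsk Hysk Hxsinf). fold K0 in Hratio.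
    replace (phi21_term y (x * s) (y * s) q t k)
      with (qbin_coef 1 y q k * t ^ k
            * (qpoch_inf (y * s * q ^ k) q / qpoch_inf (x * s * q ^ k) q / K0)).
    + rewrite Cmod_mult. apply Rmult_le_compat_l; [apply Cmod_ge_0|].
      rewrite Cmod_div by exact HK0. apply Rmult_le_compat_r.
      * apply Rlt_le, Rinv_0_lt_compat, Cmod_gt_0, HK0.
      * apply Cmod_qpoch_inf_ratio_le, Hxs.
    + rewrite Hratio. unfold phi21_term, qbin_coef. rewrite Pn_1_l.
      assert (H1 := qpoch_q_neq0 q Hq k). field. repeat split; assumption.
  - apply ex_series_scal_r, ex_series_Cmod_qbin; [exact Hq|]. rewrite Cmult_1_l. exact Ht.
Qed.

End Generating.

Theorem theorem3p1 (q x y s t : C) :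
  (Cmod q < 1)%R -> (Cmod t < 1)%R -> (Cmod s < 1)%R ->
  (Cmod (x * t) < 1)%R -> (Cmod (x * s) < 1)%R ->
  (forall k : nat, y * s * Cpow q k <> 1) ->
  exists S : nat -> C,
    (forall n : nat,
       is_series (fun m : nat =>
         hn x y q (n + m) * (Cpow t n / qpoch q q n) * (Cpow s m / qpoch q q m))
         (S n)) /\
    is_series S
      (qpoch_inf (y * s) q
         / (qpoch_inf s q * qpoch_inf (x * s) q * qpoch_inf (x * t) q)
         * phi21 y (x * s) (y * s) q t).
Proof.
  intros Hq Ht Hs Hxt Hxs Hys.
  set (K := qpoch_inf (y * s) q / (qpoch_inf s q * qpoch_inf (x * s) q)).
  set (w := phi21_term y (x * s) (y * s) q t).
  set (b := fun l => qbin_coef 1 0 q l * (x * t) ^ l).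
  exists (fun n => K * sum_n (fun k => w k * b (n - k)%nat) n). split.
  - intros n. rewrite <- sum_n_C_mult_l.
    erewrite sum_n_C_ext_loc; [apply is_series_hn_row_split; assumption|].
    intros k Hk. symmetry. apply hn_row_term_eq; assumption.
  - assert (Hxt1 : (Cmod (1 * (x * t)) < 1)%R) by (rewrite Cmult_1_l; exact Hxt).
    assert (Hb := q_binomial q Hq 1 0 (x * t) Hxt1).
    rewrite Cmult_0_l, qpoch_inf_0, Cmult_1_l in Hb by exact Hq.
    assert (Aw := ex_series_Cmod_phi21_term q Hq x y s t Ht Hxs Hys).
    replace (qpoch_inf (y * s) q / (qpoch_inf s q * qpoch_inf (x * s) q * qpoch_inf (x * t) q)
             * phi21 y (x * s) (y * s) q t)
      with (K * (phi21 y (x * s) (y * s) q t * (1 / qpoch_inf (x * t) q))).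
    + apply is_series_C_scal, is_series_C_mult;
        [apply is_series_phi21 | exact Hb | exact Aw | apply ex_series_Cmod_qbin]; assumption.
    + unfold K. field. repeat split; apply qpoch_inf_neq0_small; assumption.
Qed.
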